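(* Let $d_i>0$ for all $i$, $\mathbf{P}\in\mathbb{Z}_{\ge0}^N$ with $P_N>0$, $\mathbf{L}\in\mathbb{R}^{N\times M}$ with non-negative entries and $L_{N,j}>0$ for all $j$, and $\gamma>0$. Let $\tilde{\boldsymbol\alpha}$ be the unique maximizer on the non-negative orthant of $S(\boldsymbol\alpha)=l(\boldsymbol\alpha)-\gamma\|\boldsymbol\alpha\|_2^2$. Then $\tilde{\boldsymbol\alpha}$ is a fixed point of the map $$\mathbf{T}_\gamma(\boldsymbol\alpha)_j=\frac{\big(\mathbf{L}^T(\mathbf{d}\odot e^{-\mathbf{L}\boldsymbol\alpha})\big)_j}{(\mathbf{L}^T\mathbf{P})_j+2\gamma\alpha_j}\,\alpha_j,\qquad j=1,\dots,M.$$ Moreover, if $\boldsymbol\alpha^{(0)}$ is strictly positive then all iterates $\boldsymbol\alpha^{(n+1)}=\mathbf{T}_\gamma(\boldsymbol\alpha^{(n)})$ are strictly positive, a strictly positive fixed point of $\mathbf{T}_\gamma$ is the maximizer of $S$, and if the iterates converge then their limit is the maximizer of $S$ on the non-negative orthant.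
   Context: $l(\boldsymbol\alpha)=\sum_{i=1}^N\big(P_i\log d_i-(\mathbf{L}\boldsymbol\alpha)_iP_i-d_i e^{-(\mathbf{L}\boldsymbol\alpha)_i}-\log(P_i!)\big)$ for $\boldsymbol\alpha\ge0$ (Poisson log-likelihood of the discretized Raman lidar model). $\odot$ denotes the componentwise product and $e^{-\mathbf{L}\boldsymbol\alpha}$ is taken componentwise. *)

From Stdlib Require Import Reals Lra Lia Arith Factorial.
Open Scope R_scope.

(* Vectors in R^n are functions nat -> R, only indices 0..n-1 matter.
   Matrix L in R^{N x M} : nat -> nat -> R, entry (i,j), 0-based. *)

Fixpoint rsum (n : nat) (f : nat -> R) : R :=
  match n with
  | O => 0
  | S k => rsum k f + f k
  end.

Definition Lmul (M : nat) (L : nat -> nat -> R) (a : nat -> R) (i : nat) : R :=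
  rsum M (fun j => L i j * a j).

(* Poisson log-likelihood l(alpha) *)
Definition loglik (N M : nat) (d : nat -> R) (P : nat -> nat)
  (L : nat -> nat -> R) (a : nat -> R) : R :=
  rsum N (fun i => INR (P i) * ln (d i) - Lmul M L a i * INR (P i)
                   - d i * exp (- Lmul M L a i) - ln (INR (fact (P i)))).

Definition Sobj (N M : nat) (d : nat -> R) (P : nat -> nat)
  (L : nat -> nat -> R) (gamma : R) (a : nat -> R) : R :=
  loglik N M d P L a - gamma * rsum M (fun j => a j ^ 2).

Definition Tgamma (N M : nat) (d : nat -> R) (P : nat -> nat)
  (L : nat -> nat -> R) (gamma : R) (a : nat -> R) (j : nat) : R :=
  rsum N (fun i => L i j * (d i * exp (- Lmul M L a i)))
  / (rsum N (fun i => L i j * INR (P i)) + 2 * gamma * a j) * a j.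

Definition nonneg (M : nat) (a : nat -> R) : Prop :=
  forall j, (j < M)%nat -> 0 <= a j.

Definition posvec (M : nat) (a : nat -> R) : Prop :=
  forall j, (j < M)%nat -> 0 < a j.

Definition is_max_S (N M : nat) (d : nat -> R) (P : nat -> nat)
  (L : nat -> nat -> R) (gamma : R) (a : nat -> R) : Prop :=
  nonneg M a /\
  forall b, nonneg M b -> Sobj N M d P L gamma b <= Sobj N M d P L gamma a.

(* The gradient of the concave objective S splits as grad S = Tnum - Tden with
   Tnum = L^T (d ⊙ e^{-L α}) > 0 and Tden = L^T P + 2 γ α > 0 on the orthant, so that
   T_γ(α) - α = α ⊙ grad S / Tden.  Hence the maximizer, which has ∂_j S = 0 wherever
   α_j > 0, is a fixed point; conversely a fixed point satisfies α_j ∂_j S = 0, and if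
   moreover grad S <= 0 the KKT conditions hold, which for a concave S means maximality.
   For a positive fixed point grad S = 0 outright.  Along a convergent positive orbit the
   ratios Tnum/Tden converge to ρ_j with ρ_j α*_j = α*_j; ρ_j > 1 would force α*_j = 0
   while the orbit eventually increases in coordinate j, so ρ_j <= 1, i.e. grad S <= 0. *)

From Stdlib Require Import Reals Lra Lia Factorial FunctionalExtensionality.
From Coquelicot Require Import Coquelicot.
Open Scope R_scope.

Lemma rsum_ext n f g : (forall k, (k < n)%nat -> f k = g k) -> rsum n f = rsum n g.
Proof.
  induction n as [|n IH]; intros H; simpl; [reflexivity|].
  rewrite IH by (intros; apply H; lia).
  rewrite H by lia; reflexivity.
Qed.

Lemma rsum_0 n : rsum n (fun _ => 0) = 0.
Proof. induction n as [|n IH]; simpl; [reflexivity | rewrite IH; ring]. Qed.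

Lemma rsum_plus n f g : rsum n (fun k => f k + g k) = rsum n f + rsum n g.
Proof. induction n as [|n IH]; simpl; [ring | rewrite IH; ring]. Qed.

Lemma rsum_minus n f g : rsum n (fun k => f k - g k) = rsum n f - rsum n g.
Proof. induction n as [|n IH]; simpl; [ring | rewrite IH; ring]. Qed.

Lemma rsum_scal_l n c f : rsum n (fun k => c * f k) = c * rsum n f.
Proof. induction n as [|n IH]; simpl; [ring | rewrite IH; ring]. Qed.

Lemma rsum_le n f g : (forall k, (k < n)%nat -> f k <= g k) -> rsum n f <= rsum n g.
Proof.
  induction n as [|n IH]; intros H; simpl; [lra|].
  assert (rsum n f <= rsum n g) by (apply IH; intros; apply H; lia).
  assert (f n <= g n) by (apply H; lia).
  lra.
Qed.

Lemma rsum_ge_term n f k : (forall i, (i < n)%nat -> 0 <= f i) -> (k < n)%nat -> f k <= rsum n f.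
Proof.
  induction n as [|n IH]; intros Hf Hk; simpl; [lia|].
  assert (0 <= rsum n f).
  { rewrite <- (rsum_0 n); apply rsum_le; intros; apply Hf; lia. }
  destruct (Nat.eq_dec k n) as [->|Hkn]; [lra|].
  assert (f k <= rsum n f) by (apply IH; [intros; apply Hf|]; lia).
  assert (0 <= f n) by (apply Hf; lia).
  lra.
Qed.

Lemma rsum_swap n m F :
  rsum n (fun i => rsum m (fun j => F i j)) = rsum m (fun j => rsum n (fun i => F i j)).
Proof.
  induction n as [|n IH]; simpl.
  - induction m as [|m IHm]; simpl; [reflexivity | rewrite <- IHm; ring].
  - rewrite IH, <- rsum_plus; reflexivity.
Qed.

Lemma rsum_delta n f j : (j < n)%nat ->
  rsum n (fun k => f k * (if Nat.eqb k j then 1 else 0)) = f j.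
Proof.
  induction n as [|n IH]; intros Hj; simpl; [lia|].
  destruct (Nat.eqb_spec n j) as [<-|Hnj].
  - rewrite (rsum_ext n _ (fun _ => 0)), rsum_0; [ring|].
    intros k Hk; destruct (Nat.eqb_spec k n); [lia | ring].
  - rewrite IH by lia; ring.
Qed.

Lemma is_derive_rsum n (f : nat -> R -> R) (df : nat -> R) x :
  (forall k, (k < n)%nat -> is_derive (f k) x (df k)) ->
  is_derive (fun t => rsum n (fun k => f k t)) x (rsum n df).
Proof.
  induction n as [|n IH]; intros H; simpl.
  - apply (is_derive_const 0).
  - apply (is_derive_plus (fun t => rsum n (fun k => f k t)) (f n));
      [apply IH; intros; apply H | apply H]; lia.
Qed.

Lemma is_lim_seq_rsum m (u : nat -> nat -> R) (l : nat -> R) :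
  (forall k, (k < m)%nat -> is_lim_seq (fun n => u n k) (l k)) ->
  is_lim_seq (fun n => rsum m (u n)) (rsum m l).
Proof.
  induction m as [|m IH]; intros H; simpl.
  - apply is_lim_seq_const.
  - apply is_lim_seq_plus'; [apply IH; intros; apply H | apply H]; lia.
Qed.

Lemma Lmul_line M L a v t i :
  Lmul M L (fun k => a k + t * v k) i = Lmul M L a i + t * Lmul M L v i.
Proof.
  unfold Lmul; rewrite <- rsum_scal_l, <- rsum_plus.
  apply rsum_ext; intros; ring.
Qed.

Lemma Lmul_minus M L a b i :
  Lmul M L (fun k => b k - a k) i = Lmul M L b i - Lmul M L a i.
Proof.
  unfold Lmul; rewrite <- rsum_minus.
  apply rsum_ext; intros; ring.
Qed.

Lemma rsum_Lmul_transpose N M L v w :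
  rsum N (fun i => Lmul M L v i * w i) = rsum M (fun j => v j * rsum N (fun i => L i j * w i)).
Proof.
  unfold Lmul.
  rewrite (rsum_ext N _ (fun i => rsum M (fun j => L i j * v j * w i)))
    by (intros; rewrite Rmult_comm, <- rsum_scal_l; apply rsum_ext; intros; ring).
  rewrite rsum_swap; apply rsum_ext; intros.
  rewrite <- rsum_scal_l; apply rsum_ext; intros; ring.
Qed.

Lemma is_lim_seq_ratio_recursion (u r : nat -> R) (l rho : R) :
  (forall n, 0 < u n) -> (forall n, u (S n) = r n * u n) ->
  is_lim_seq u l -> is_lim_seq r rho -> rho * l = l /\ rho <= 1.
Proof.
  intros Hpos Hrec Hu Hr.
  assert (Hfix : rho * l = l).
  { assert (H1 : is_lim_seq (fun n => u (S n)) (rho * l)).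
    { apply (is_lim_seq_ext (fun n => r n * u n)); [intros; now rewrite Hrec|].
      now apply is_lim_seq_mult'. }
    apply is_lim_seq_incr_1 in Hu.
    apply is_lim_seq_unique in H1, Hu. rewrite Hu in H1. now injection H1. }
  split; [exact Hfix|].
  destruct (Rle_lt_dec rho 1) as [Hle|Hgt]; [exact Hle|exfalso].
  assert (Hl0 : l = 0) by nra.
  (* Once [r n > 1] the sequence grows, so its limit exceeds a positive term. *)
  apply is_lim_seq_spec in Hr.
  destruct (Hr (mkposreal _ (proj2 (Rlt_0_minus _ _) Hgt))) as [n0 Hn0]; simpl in Hn0.
  assert (Hgrow : forall k, u n0 <= u (n0 + k)%nat).
  { induction k as [|k IH]; [rewrite Nat.add_0_r; lra|].
    rewrite Nat.add_succ_r, Hrec.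
    specialize (Hn0 (n0 + k)%nat ltac:(lia)); apply Rabs_def2 in Hn0.
    specialize (Hpos (n0 + k)%nat). nra. }
  assert (Hle : Rbar_le (u n0) l).
  { apply (is_lim_seq_le_loc (fun _ => u n0) u); [|apply is_lim_seq_const|exact Hu].
    exists n0; intros n Hn. replace n with (n0 + (n - n0))%nat by lia. apply Hgrow. }
  simpl in Hle. specialize (Hpos n0). lra.
Qed.

Section RamanObjective.

Variables (N M : nat) (d : nat -> R) (P : nat -> nat) (L : nat -> nat -> R) (gamma : R).

Hypothesis N_pos : (0 < N)%nat.
Hypothesis d_pos : forall i, (i < N)%nat -> 0 < d i.
Hypothesis P_last_pos : (0 < P (N - 1)%nat)%nat.
Hypothesis L_nonneg : forall i j, (i < N)%nat -> (j < M)%nat -> 0 <= L i j.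
Hypothesis L_last_pos : forall j, (j < M)%nat -> 0 < L (N - 1)%nat j.
Hypothesis gamma_nonneg : 0 <= gamma.

Local Notation S := (Sobj N M d P L gamma).
Local Notation T := (Tgamma N M d P L gamma).

Definition Tnum (a : nat -> R) (j : nat) : R :=
  rsum N (fun i => L i j * (d i * exp (- Lmul M L a i))).

Definition Tden (a : nat -> R) (j : nat) : R :=
  rsum N (fun i => L i j * INR (P i)) + 2 * gamma * a j.

Definition gradS (a : nat -> R) (j : nat) : R := Tnum a j - Tden a j.

Lemma Tgamma_sub a j : 0 < Tden a j -> T a j - a j = gradS a j / Tden a j * a j.
Proof. intros; unfold Tgamma, gradS, Tnum, Tden in *; field; lra. Qed.

Lemma Tnum_pos a j : (j < M)%nat -> 0 < Tnum a j.
Proof.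
  intros Hj; unfold Tnum.
  apply Rlt_le_trans with (L (N - 1)%nat j * (d (N - 1)%nat * exp (- Lmul M L a (N - 1)%nat))).
  - apply Rmult_lt_0_compat; [auto|].
    apply Rmult_lt_0_compat; [apply d_pos; lia | apply exp_pos].
  - apply (rsum_ge_term N (fun i => L i j * (d i * exp (- Lmul M L a i)))); [|lia].
    intros i Hi; apply Rmult_le_pos; [auto|].
    apply Rmult_le_pos; [apply Rlt_le, d_pos; lia | apply Rlt_le, exp_pos].
Qed.

Lemma Tden_pos a j : (j < M)%nat -> 0 <= a j -> 0 < Tden a j.
Proof.
  intros Hj Ha; unfold Tden.
  assert (0 < L (N - 1)%nat j * INR (P (N - 1)%nat))
    by (apply Rmult_lt_0_compat; [auto | apply lt_0_INR; auto]).
  assert (L (N - 1)%nat j * INR (P (N - 1)%nat) <= rsum N (fun i => L i j * INR (P i))).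
  { apply (rsum_ge_term N (fun i => L i j * INR (P i))); [|lia].
    intros; apply Rmult_le_pos; [auto | apply pos_INR]. }
  nra.
Qed.

Lemma gradS_pairing a v :
  rsum M (fun j => gradS a j * v j) =
  rsum N (fun i => Lmul M L v i * (d i * exp (- Lmul M L a i) - INR (P i)))
  - gamma * rsum M (fun j => 2 * a j * v j).
Proof.
  rewrite rsum_Lmul_transpose, <- rsum_scal_l, <- rsum_minus.
  apply rsum_ext; intros j _; unfold gradS, Tnum, Tden.
  rewrite (rsum_ext N (fun i => L i j * (d i * exp (- Lmul M L a i) - INR (P i)))
             (fun i => L i j * (d i * exp (- Lmul M L a i)) - L i j * INR (P i)))
    by (intros; ring).
  rewrite rsum_minus; ring.
Qed.

Lemma Sobj_line_derive a v :
  is_derive (fun t => S (fun k => a k + t * v k)) 0 (rsum M (fun j => gradS a j * v j)).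
Proof.
  rewrite gradS_pairing.
  apply is_derive_ext with (fun t =>
    rsum N (fun i => INR (P i) * ln (d i) - (Lmul M L a i + t * Lmul M L v i) * INR (P i)
                     - d i * exp (- (Lmul M L a i + t * Lmul M L v i)) - ln (INR (fact (P i))))
    - gamma * rsum M (fun k => (a k + t * v k) ^ 2)).
  { intros t; unfold Sobj, loglik; f_equal.
    apply rsum_ext; intros; rewrite Lmul_line; reflexivity. }
  apply (is_derive_minus (fun t => rsum N _) (fun t => gamma * rsum M _)).
  - apply (is_derive_rsum N (fun i t => _)); intros i _.
    auto_derive; [exact I|].
    rewrite Rmult_0_l, Rplus_0_r; ring.
  - apply is_derive_scal, (is_derive_rsum M (fun k t => _)); intros k _.
    auto_derive; [exact I|]; ring.
Qed.

Lemma Sobj_concave a b : S b - S a <= rsum M (fun j => gradS a j * (b j - a j)).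
Proof.
  rewrite gradS_pairing; unfold Sobj, loglik.
  assert (Hlik : forall i, (i < N)%nat ->
    - Lmul M L b i * INR (P i) - d i * exp (- Lmul M L b i)
    - (- Lmul M L a i * INR (P i) - d i * exp (- Lmul M L a i))
    <= (Lmul M L b i - Lmul M L a i) * (d i * exp (- Lmul M L a i) - INR (P i))).
  { intros i Hi.
    (* tangent-line bound for the convex function [exp] *)
    assert (Htan : exp (- Lmul M L a i) * (1 - (Lmul M L b i - Lmul M L a i))
                   <= exp (- Lmul M L b i)).
    { replace (- Lmul M L b i) with (- Lmul M L a i + - (Lmul M L b i - Lmul M L a i)) by ring.
      rewrite exp_plus; apply Rmult_le_compat_l; [apply Rlt_le, exp_pos | apply exp_ineq1_le]. }
    specialize (d_pos i Hi); nra. }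
  assert (Hsq : forall j, (j < M)%nat -> 2 * a j * (b j - a j) <= b j ^ 2 - a j ^ 2).
  { intros j _; pose proof (pow2_ge_0 (b j - a j)); nra. }
  assert (Hloglik : rsum N (fun i => INR (P i) * ln (d i) - Lmul M L b i * INR (P i)
            - d i * exp (- Lmul M L b i) - ln (INR (fact (P i))))
          - rsum N (fun i => INR (P i) * ln (d i) - Lmul M L a i * INR (P i)
            - d i * exp (- Lmul M L a i) - ln (INR (fact (P i))))
          <= rsum N (fun i => Lmul M L (fun k => b k - a k) i
                              * (d i * exp (- Lmul M L a i) - INR (P i)))).
  { rewrite <- rsum_minus; apply rsum_le; intros i Hi.
    rewrite Lmul_minus; specialize (Hlik i Hi); lra. }
  assert (Hnorm : rsum M (fun j => 2 * a j * (b j - a j))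
                  <= rsum M (fun j => b j ^ 2) - rsum M (fun j => a j ^ 2))
    by (rewrite <- rsum_minus; apply rsum_le; exact Hsq).
  nra.
Qed.

Lemma kkt_is_max_S a :
  (forall j, (j < M)%nat -> 0 <= a j) ->
  (forall j, (j < M)%nat -> gradS a j <= 0 /\ gradS a j * a j = 0) ->
  is_max_S N M d P L gamma a.
Proof.
  intros Ha Hkkt; split; [exact Ha|]; intros b Hb.
  assert (Hslope : rsum M (fun j => gradS a j * (b j - a j)) <= 0).
  { rewrite <- (rsum_0 M); apply rsum_le; intros j Hj.
    destruct (Hkkt j Hj) as [Hg Hc]; specialize (Hb j Hj); nra. }
  pose proof (Sobj_concave a b); lra.
Qed.

Lemma is_max_S_gradS a j :
  is_max_S N M d P L gamma a -> (j < M)%nat -> 0 < a j -> gradS a j = 0.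
Proof.
  intros [Ha Hmax] Hj Haj.
  set (e := fun k => if Nat.eqb k j then 1 else 0).
  set (f := fun t => S (fun k => a k + t * e k)).
  assert (Hf : derivable_pt_lim f 0 (gradS a j)).
  { apply is_derive_Reals; unfold f.
    rewrite <- (rsum_delta M (gradS a) j Hj); apply Sobj_line_derive. }
  rewrite <- (derive_pt_eq_0 f 0 _ (exist _ _ Hf) Hf).
  apply (deriv_maximum f (- a j) (a j)); [lra | lra |].
  intros t Ht1 Ht2.
  replace (f 0) with (S a)
    by (unfold f; f_equal; apply functional_extensionality; intros; ring).
  apply Hmax; intros k Hk; unfold e.
  destruct (Nat.eqb_spec k j) as [->|_]; [lra | rewrite Rmult_0_r, Rplus_0_r; auto].
Qed.

Lemma is_max_S_Tgamma_fixed a j :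
  is_max_S N M d P L gamma a -> (j < M)%nat -> T a j = a j.
Proof.
  intros Hmax Hj.
  assert (Ha : 0 <= a j) by (apply (proj1 Hmax); exact Hj).
  assert (Hden := Tden_pos a j Hj Ha).
  apply Rminus_diag_uniq; rewrite Tgamma_sub by exact Hden.
  destruct (Rle_lt_or_eq_dec _ _ Ha) as [Hpos|<-]; [|ring].
  rewrite (is_max_S_gradS a j Hmax Hj Hpos); unfold Rdiv; ring.
Qed.

Lemma Tgamma_fixed_is_max a :
  posvec M a -> (forall j, (j < M)%nat -> T a j = a j) -> is_max_S N M d P L gamma a.
Proof.
  intros Ha Hfix; apply kkt_is_max_S; [intros j Hj; apply Rlt_le, Ha, Hj|].
  intros j Hj.
  assert (Hden := Tden_pos a j Hj (Rlt_le _ _ (Ha j Hj))).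
  assert (Hsub := Tgamma_sub a j Hden); rewrite Hfix, Rminus_diag in Hsub by exact Hj.
  assert (Hgrad : gradS a j = 0).
  { symmetry in Hsub; apply Rmult_integral in Hsub as [Hq|Ha0]; [|specialize (Ha j Hj); lra].
    apply (Rmult_eq_reg_r (/ Tden a j)); [rewrite Rmult_0_l; exact Hq|].
    apply Rinv_neq_0_compat; lra. }
  rewrite Hgrad; split; [lra | ring].
Qed.

Lemma iter_Tgamma_pos a0 : posvec M a0 -> forall n, posvec M (Nat.iter n T a0).
Proof.
  intros Ha0 n; induction n as [|n IH]; simpl; [exact Ha0|].
  intros j Hj; change (0 < Tnum (Nat.iter n T a0) j / Tden (Nat.iter n T a0) j * Nat.iter n T a0 j).
  specialize (IH j Hj).
  apply Rmult_lt_0_compat; [apply Rdiv_lt_0_compat|]; auto using Tnum_pos, Tden_pos, Rlt_le.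
Qed.

Lemma is_lim_seq_Tnum (al : nat -> nat -> R) (a : nat -> R) j :
  (forall k, (k < M)%nat -> is_lim_seq (fun n => al n k) (a k)) ->
  is_lim_seq (fun n => Tnum (al n) j) (Tnum a j).
Proof.
  intros Hlim.
  apply is_lim_seq_rsum; intros i _.
  apply is_lim_seq_mult'; [apply is_lim_seq_const|].
  apply is_lim_seq_mult'; [apply is_lim_seq_const|].
  apply (is_lim_seq_continuous exp (fun n => - Lmul M L (al n) i));
    [apply derivable_continuous_pt, derivable_pt_exp|].
  apply (is_lim_seq_opp _ (Lmul M L a i)), is_lim_seq_rsum; intros k Hk.
  apply is_lim_seq_mult'; [apply is_lim_seq_const | auto].
Qed.

Lemma is_lim_seq_Tden (al : nat -> nat -> R) (a : nat -> R) j :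
  is_lim_seq (fun n => al n j) (a j) -> is_lim_seq (fun n => Tden (al n) j) (Tden a j).
Proof.
  intros Hlim.
  apply is_lim_seq_plus'; [apply is_lim_seq_const|].
  apply is_lim_seq_mult'; [apply is_lim_seq_const | exact Hlim].
Qed.

Lemma Tgamma_limit_is_max a0 astar :
  posvec M a0 ->
  (forall j, (j < M)%nat -> Un_cv (fun n => Nat.iter n T a0 j) (astar j)) ->
  is_max_S N M d P L gamma astar.
Proof.
  intros Ha0 Hcv.
  set (al := fun n => Nat.iter n T a0).
  assert (Hal : forall n k, (k < M)%nat -> 0 < al n k) by (intros; apply iter_Tgamma_pos; auto).
  assert (Hlim : forall k, (k < M)%nat -> is_lim_seq (fun n => al n k) (astar k))
    by (intros; apply is_lim_seq_Reals, Hcv; auto).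
  assert (Hnn : forall k, (k < M)%nat -> 0 <= astar k).
  { intros k Hk.
    exact (is_lim_seq_le (fun _ => 0) _ _ _ (fun n => Rlt_le _ _ (Hal n k Hk))
             (is_lim_seq_const 0) (Hlim k Hk)). }
  apply kkt_is_max_S; [exact Hnn|]; intros j Hj.
  assert (Hden_pos : 0 < Tden astar j) by (apply Tden_pos; auto).
  destruct (is_lim_seq_ratio_recursion (fun n => al n j)
              (fun n => Tnum (al n) j / Tden (al n) j) (astar j) (Tnum astar j / Tden astar j))
    as [Hfix Hle]; auto.
  - apply is_lim_seq_div'; [apply is_lim_seq_Tnum, Hlim | apply is_lim_seq_Tden, Hlim, Hj | lra].
  - assert (Hratio : Tnum astar j / Tden astar j = 1 + gradS astar j / Tden astar j)
      by (unfold gradS; field; lra).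
    rewrite Hratio in Hfix, Hle.
    assert (gradS astar j / Tden astar j <= 0) by lra.
    split.
    + apply Rmult_le_reg_r with (/ Tden astar j); [apply Rinv_0_lt_compat; lra | lra].
    + assert (Hzero : gradS astar j / Tden astar j * astar j = 0) by lra.
      replace (gradS astar j * astar j) with (Tden astar j * (gradS astar j / Tden astar j * astar j))
        by (field; lra).
      rewrite Hzero; ring.
Qed.

End RamanObjective.

Theorem mainTheorem4
  (N M : nat) (d : nat -> R) (P : nat -> nat) (L : nat -> nat -> R) (gamma : R)
  (atil : nat -> R)
  (HN : (0 < N)%nat)
  (Hd : forall i, (i < N)%nat -> 0 < d i)
  (HPN : (0 < P (N - 1)%nat)%nat)
  (HL : forall i j, (i < N)%nat -> (j < M)%nat -> 0 <= L i j)
  (HLN : forall j, (j < M)%nat -> 0 < L (N - 1)%nat j)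
  (Hgamma : 0 < gamma)
  (Hmax : is_max_S N M d P L gamma atil)
  (Huniq : forall b, is_max_S N M d P L gamma b ->
                     forall j, (j < M)%nat -> b j = atil j) :
  (forall j, (j < M)%nat -> Tgamma N M d P L gamma atil j = atil j) /\
  (forall a0 : nat -> R, posvec M a0 ->
     forall n, posvec M (Nat.iter n (Tgamma N M d P L gamma) a0)) /\
  (forall a : nat -> R, posvec M a ->
     (forall j, (j < M)%nat -> Tgamma N M d P L gamma a j = a j) ->
     forall j, (j < M)%nat -> a j = atil j) /\
  (forall (a0 astar : nat -> R), posvec M a0 ->
     (forall j, (j < M)%nat ->
        Un_cv (fun n => Nat.iter n (Tgamma N M d P L gamma) a0 j) (astar j)) ->
     forall j, (j < M)%nat -> astar j = atil j).
Proof.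
  pose proof (Rlt_le _ _ Hgamma) as Hgamma0.
  split; [|split; [|split]].
  - intros j; apply (is_max_S_Tgamma_fixed N M d P L gamma HN HPN HL HLN Hgamma0 _ _ Hmax).
  - exact (iter_Tgamma_pos N M d P L gamma HN Hd HPN HL HLN Hgamma0).
  - intros a Ha Hfix; apply Huniq.
    exact (Tgamma_fixed_is_max N M d P L gamma HN Hd HPN HL HLN Hgamma0 a Ha Hfix).
  - intros a0 astar Ha0 Hcv; apply Huniq.
    exact (Tgamma_limit_is_max N M d P L gamma HN Hd HPN HL HLN Hgamma0 a0 astar Ha0 Hcv).
Qed.
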